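(* Let $f:\mathbb{R}^n\to\mathbb{R}^n$ be continuous, let $\Gamma\in\mathbb{R}^{n\times n}$, and let $L=(l_{ij})\in\mathbb{R}^{m\times m}$ be a coupling matrix (i.e. $l_{ij}\ge 0$ for $i\ne j$ and $\sum_{j=1}^m l_{ij}=0$ for every $i$) which is irreducible with $\mathrm{Rank}(L)=m-1$. Consider the coupled system $$\frac{dx_i(t)}{dt}=f(x_i(t))+c\sum_{j=1}^m l_{ij}\Gamma x_j(t),\qquad i=1,\dots,m,$$ with $x_i(t)\in\mathbb{R}^n$ and coupling strength $c>0$. Suppose there exist a positive definite matrix $P\in\mathbb{R}^{n\times n}$, a matrix $\Delta\in\mathbb{R}^{n\times n}$ and $\epsilon>0$ such that $f$ satisfies the QUAD condition $$(x-y)^T P\big\{[f(x)-f(y)]-\Delta(x-y)\big\}\le -\epsilon (x-y)^T(x-y)\quad\text{for all }x,y\in\mathbb{R}^n,$$ that $\mathrm{Ran}(P\Delta)=\mathrm{Ran}(P\Gamma)$ (in particular this holds if $\Delta=\Gamma$), and that $P\Gamma=BB^T$ for some matrix $B$ and $P\Gamma$ is positive definite on the range $\mathrm{Ran}(P\Gamma)$. Then the system reaches synchronization if the coupling strength $c$ is large enough.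
   Context: $\mathrm{Ran}(M)$ denotes the range (column space) of a matrix $M$. ''Positive definite on $\mathrm{Ran}(P\Gamma)$'' means $u^T P\Gamma u>0$ for every nonzero $u\in\mathrm{Ran}(P\Gamma)$. The system reaches synchronization if $\lim_{t\to\infty}\|x_i(t)-x_j(t)\|=0$ for all $i,j$ and all initial conditions. *)

From HB Require Import structures.
From mathcomp Require Import all_boot all_order all_algebra.
From mathcomp Require Import all_classical all_reals all_analysis.
Set Implicit Arguments. Unset Strict Implicit. Unset Printing Implicit Defensive.
Import Order.TTheory GRing.Theory Num.Theory.
Import numFieldNormedType.Exports.
Local Open Scope ring_scope.
Local Open Scope classical_set_scope.

Definition qform (R : realType) n (M : 'M[R]_n) (u : 'cV[R]_n) : R :=
  (u^T *m M *m u) 0 0.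

Definition posdef (R : realType) n (M : 'M[R]_n) : Prop :=
  M^T = M /\ forall u : 'cV[R]_n, u != 0 -> 0 < qform M u.

Definition Ran (R : realType) n p (M : 'M[R]_(n, p)) : set 'cV[R]_n :=
  [set u | exists v : 'cV[R]_p, u = M *m v].

Definition posdef_on (R : realType) n (M : 'M[R]_n) (S : set 'cV[R]_n) : Prop :=
  forall u, S u -> u != 0 -> 0 < qform M u.

Definition coupling_matrix (R : realType) m (L : 'M[R]_m) : Prop :=
  (forall i j, i != j -> 0 <= L i j) /\ (forall i, \sum_(j < m) L i j = 0).

(* irreducible matrix: for every nonempty proper subset S of indices there is
   an entry L i j <> 0 with i in S and j outside S (equivalently, L is not
   permutation-similar to a block triangular matrix). *)
Definition irreducible_mx (R : realType) m (L : 'M[R]_m) : Prop :=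
  forall S : {set 'I_m}, S != finset.set0 -> S != [set: 'I_m]%SET ->
    exists i j, [/\ i \in S, j \notin S & L i j != 0].

Definition QUAD (R : realType) n (f : 'cV[R]_n -> 'cV[R]_n)
    (P Delta : 'M[R]_n) (eps : R) : Prop :=
  forall x y : 'cV[R]_n,
    ((x - y)^T *m P *m ((f x - f y) - Delta *m (x - y))) 0 0
      <= - eps * ((x - y)^T *m (x - y)) 0 0.

Definition is_solution (R : realType) n m (f : 'cV[R]_n -> 'cV[R]_n)
    (Gamma : 'M[R]_n) (L : 'M[R]_m) (c : R) (x : 'I_m -> R -> 'cV[R]_n) : Prop :=
  forall (i : 'I_m) (t : R), 0 < t ->
    is_derive t 1 (x i) (f (x i t) + c *: \sum_(j < m) L i j *: (Gamma *m x j t)).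

Definition synchronizes (R : realType) n m (x : 'I_m -> R -> 'cV[R]_n) : Prop :=
  forall i j, (x i t - x j t) @[t --> +oo] --> (0 : 'cV[R]_n).

(* Let xi > 0 be the left Perron vector of L (xi^T L = 0, sum xi = 1), xb the
   xi-weighted mean of the x_j and e_i = x_i - xb.  Along solutions the energy
   V = sum_i xi_i e_i^T P e_i satisfies V'/2 <= A(e) + c C(e), where QUAD gives
   A(e) = sum_i xi_i (e_i^T P Delta e_i - eps |e_i|^2) and, as P Gamma = B B^T,
   C(e) = sum_ij xi_i l_ij e_i^T P Gamma e_j = -1/2 sum_ij xi_i l_ij |B^T (e_i - e_j)|^2.
   So C <= 0, and if C(e) = 0 irreducibility makes all B^T e_i equal, hence zero;
   then e_i^T P Delta e_i = 0 by the range condition and A(e) < 0.  Compactness of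
   the unit sphere of {sum_i xi_i e_i = 0} yields k with A + k C <= -V/(k+1) there,
   so for c >= k we get V' <= -2V/(k+1): V, hence every e_i, tends to 0. *)

From HB Require Import structures.
From mathcomp Require Import all_boot all_order all_algebra.
From mathcomp Require Import all_classical all_reals all_analysis.
From mathcomp Require Import finmap ring lra.
Import Order.TTheory GRing.Theory Num.Theory.
Import numFieldNormedType.Exports.
Local Open Scope ring_scope.
Set Implicit Arguments. Unset Strict Implicit. Unset Printing Implicit Defensive.

Definition bform (R : comPzRingType) n (M : 'M[R]_n) (u w : 'cV[R]_n) : R :=
  (u^T *m M *m w) 0 0.

Section BilinearForm.
Variables (R : comPzRingType) (n : nat).
Implicit Types (M N : 'M[R]_n) (u w : 'cV[R]_n).

Lemma bformE M u w : bform M u w = \sum_a \sum_b u a 0 * M a b * w b 0.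
Proof.
rewrite /bform mxE exchange_big; apply: eq_bigr => b _; rewrite mxE big_distrl.
by apply: eq_bigr => a _; rewrite !mxE.
Qed.

Lemma bformDl M u1 u2 w : bform M (u1 + u2) w = bform M u1 w + bform M u2 w.
Proof. by rewrite /bform linearD !mulmxDl mxE. Qed.

Lemma bformDr M u w1 w2 : bform M u (w1 + w2) = bform M u w1 + bform M u w2.
Proof. by rewrite /bform mulmxDr mxE. Qed.

Lemma bformZl M a u w : bform M (a *: u) w = a * bform M u w.
Proof. by rewrite /bform linearZ -!scalemxAl mxE. Qed.

Lemma bformZr M a u w : bform M u (a *: w) = a * bform M u w.
Proof. by rewrite /bform -scalemxAr mxE. Qed.

Lemma bformNl M u w : bform M (- u) w = - bform M u w.
Proof. by rewrite -scaleN1r bformZl mulN1r. Qed.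

Lemma bformNr M u w : bform M u (- w) = - bform M u w.
Proof. by rewrite -scaleN1r bformZr mulN1r. Qed.

Lemma bformBl M u1 u2 w : bform M (u1 - u2) w = bform M u1 w - bform M u2 w.
Proof. by rewrite bformDl bformNl. Qed.

Lemma bformBr M u w1 w2 : bform M u (w1 - w2) = bform M u w1 - bform M u w2.
Proof. by rewrite bformDr bformNr. Qed.

Lemma bform0l M w : bform M 0 w = 0.
Proof. by rewrite /bform trmx0 !mul0mx mxE. Qed.

Lemma bform0r M u : bform M u 0 = 0.
Proof. by rewrite /bform mulmx0 mxE. Qed.

Lemma bform_suml m M (a : 'I_m -> R) (u : 'I_m -> 'cV[R]_n) w :
  bform M (\sum_i a i *: u i) w = \sum_i a i * bform M (u i) w.
Proof.
elim/big_ind2: _ => [|? ? ? ? <- <-|i _]; by rewrite ?bform0l ?bformDl ?bformZl.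
Qed.

Lemma bform_sumr m M (a : 'I_m -> R) u (w : 'I_m -> 'cV[R]_n) :
  bform M u (\sum_i a i *: w i) = \sum_i a i * bform M u (w i).
Proof.
elim/big_ind2: _ => [|? ? ? ? <- <-|i _]; by rewrite ?bform0r ?bformDr ?bformZr.
Qed.

Lemma bformC M u w : M^T = M -> bform M u w = bform M w u.
Proof.
move=> MT; rewrite /bform -[in LHS](trmxK (_ *m w)) mxE.
by rewrite !trmx_mul trmxK MT mulmxA.
Qed.

Lemma bform_mulmx M N u w : bform (M *m N) u w = bform M u (N *m w).
Proof. by rewrite /bform !mulmxA. Qed.

Lemma bform1 u w : bform 1%:M u w = (u^T *m w) 0 0.
Proof. by rewrite /bform mulmx1. Qed.

End BilinearForm.

Lemma bform_mul_tr (R : comPzRingType) n k (B : 'M[R]_(n, k)) u w :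
  bform (B *m B^T) u w = bform 1%:M (B^T *m u) (B^T *m w).
Proof. by rewrite bform1 /bform trmx_mul trmxK !mulmxA. Qed.

Section PositiveForms.
Variables (R : realDomainType) (n : nat).
Implicit Types (u : 'cV[R]_n).

Lemma bform1E u : bform 1%:M u u = \sum_a u a 0 ^+ 2.
Proof. by rewrite bform1 mxE; apply: eq_bigr => a _; rewrite mxE expr2. Qed.

Lemma bform1_ge0 u : 0 <= bform 1%:M u u.
Proof. by rewrite bform1E; apply: sumr_ge0 => a _; apply: sqr_ge0. Qed.

Lemma bform1_eq0 u : (bform 1%:M u u == 0) = (u == 0).
Proof.
apply/idP/eqP => [|->]; last by rewrite bform0l.
rewrite bform1E psumr_eq0 => [/allP u0|a _]; last exact: sqr_ge0.
apply/matrixP => a b; rewrite ord1 mxE; apply/eqP.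
by rewrite -sqrf_eq0; apply: u0; rewrite mem_index_enum.
Qed.

Lemma bform1_gt0 u : u != 0 -> 0 < bform 1%:M u u.
Proof. by move=> u0; rewrite lt_def bform1_eq0 u0 bform1_ge0. Qed.

End PositiveForms.

Lemma bform_mul_tr_ge0 (R : realDomainType) n k (B : 'M[R]_(n, k)) (u : 'cV[R]_n) :
  0 <= bform (B *m B^T) u u.
Proof. by rewrite bform_mul_tr bform1_ge0. Qed.

Section CouplingMatrix.
Variables (R : realType) (m : nat) (L : 'M[R]_m).
Hypothesis coupL : coupling_matrix L.

Lemma coupling_mx_diag_le0 i : L i i <= 0.
Proof.
have := proj2 coupL i; rewrite (bigD1 i) //= => /eqP; rewrite addr_eq0 => /eqP ->.
by rewrite oppr_le0; apply: sumr_ge0 => j ji; apply: (proj1 coupL); rewrite eq_sym.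
Qed.

Lemma coupling_mx_left_kernel : (0 < m)%N -> exists2 v : 'rV[R]_m, v != 0 & v *m L = 0.
Proof.
move=> m_gt0; apply/det0P; rewrite -det_tr; apply/det0P.
exists (const_mx 1).
  by apply/eqP => /matrixP /(_ 0 (Ordinal m_gt0)); rewrite !mxE => /eqP; rewrite oner_eq0.
apply/matrixP => i j; rewrite !mxE -[RHS](proj2 coupL j).
by apply: eq_bigr => k _; rewrite !mxE mul1r.
Qed.

Lemma coupling_mx_left_kernel_norm (v : 'rV[R]_m) :
  v *m L = 0 -> forall j, \sum_i `|v 0 i| * L i j = 0.
Proof.
move=> vL.
have vLj j : \sum_i v 0 i * L i j = 0.
  by have /matrixP /(_ 0 j) := vL; rewrite !mxE.
have col_ge0 j : 0 <= \sum_i `|v 0 i| * L i j.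
  have off_diag : `|v 0 j * L j j| <= \sum_(i | i != j) `|v 0 i| * L i j.
    have /eqP := vLj j; rewrite (bigD1 j) //= addr_eq0 => /eqP ->.
    rewrite normrN (le_trans (ler_norm_sum _ _ _)) // ler_sum // => i ij.
    by rewrite normrM (ger0_norm (proj1 coupL _ _ ij)).
  rewrite normrM (ler0_norm (coupling_mx_diag_le0 j)) mulrN in off_diag.
  by rewrite (bigD1 j) //=; lra.
have : \sum_j \sum_i `|v 0 i| * L i j = 0.
  by rewrite exchange_big big1 // => i _; rewrite -mulr_sumr (proj2 coupL) mulr0.
by move/(psumr_eq0P (fun j _ => col_ge0 j)) => h j; apply: h.
Qed.

Hypothesis irrL : irreducible_mx L.

Lemma irreducible_mx_closed (S : {set 'I_m}) : S != finset.set0 ->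
  (forall i j, L i j != 0 -> i \in S -> j \in S) -> S = [set: 'I_m]%SET.
Proof.
move=> S0 S_closed; apply/eqP; apply: contraT => ST.
by have [i [j [iS /negP jS /S_closed/(_ iS)]]] := irrL S0 ST.
Qed.

Lemma irreducible_mx_const (T : eqType) (g : 'I_m -> T) :
  (forall i j, L i j != 0 -> g i = g j) -> forall i j, g i = g j.
Proof.
move=> gL i j; pose S := [set k | g k == g i].
have ST : S = [set: 'I_m]%SET.
  apply: irreducible_mx_closed; first by apply/set0Pn; exists i; rewrite inE.
  by move=> a b Lab; rewrite !inE -(gL a b Lab).
have : j \in S by rewrite ST inE.
by rewrite inE => /eqP.
Qed.

Lemma irreducible_left_kernel_gt0 (v : 'I_m -> R) :
  (forall j, \sum_i v i * L i j = 0) -> (forall i, 0 <= v i) -> (exists i, v i != 0) ->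
  forall i, 0 < v i.
Proof.
move=> vL v_ge0 [i0 vi0] i; rewrite lt_def v_ge0 andbT.
pose S := [set k | v k != 0].
have : i \in S; last by rewrite inE.
rewrite (@irreducible_mx_closed S) ?inE //; first by apply/set0Pn; exists i0; rewrite inE.
move=> a b Lab; rewrite !inE; apply: contraNneq => vb0.
have term_ge0 k : 0 <= v k * L k b.
  have [->|kb] := eqVneq k b; first by rewrite vb0 mul0r.
  by rewrite mulr_ge0 // (proj1 coupL).
have /(_ a isT) /eqP := psumr_eq0P (fun k _ => term_ge0 k) (vL b).
by rewrite mulf_eq0 (negPf Lab) orbF.
Qed.

Lemma coupling_mx_perron : (0 < m)%N ->
  exists xi : 'I_m -> R,
    [/\ forall i, 0 < xi i, \sum_i xi i = 1 & forall j, \sum_i xi i * L i j = 0].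
Proof.
move=> m_gt0; have [v v0 vL] := coupling_mx_left_kernel m_gt0.
pose z i := `|v 0 i|.
have zL := coupling_mx_left_kernel_norm vL.
have [i0 vi0] : exists i, z i != 0.
  apply/existsP; apply: contraNT v0; rewrite negb_exists => /forallP z0.
  apply/eqP/matrixP => a b; rewrite ord1 mxE; apply/eqP.
  by rewrite -normr_eq0; apply/negPn; apply: z0.
have z_gt0 : forall i, 0 < z i.
  by apply: irreducible_left_kernel_gt0 => // [i|]; [apply: normr_ge0 | exists i0].
have s_gt0 : 0 < \sum_i z i.
  by rewrite (bigD1 (Ordinal m_gt0)) //= ltr_pwDl // sumr_ge0 // => i _; apply: ltW.
exists (fun i => z i / \sum_k z k); split.
- by move=> i; apply: divr_gt0.
- by rewrite -mulr_suml mulfV // gt_eqF.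
- by move=> j; under eq_bigr do rewrite mulrAC; rewrite -mulr_suml zL mul0r.
Qed.

End CouplingMatrix.

Definition wqform (R : realType) n m (xi : 'I_m -> R) (M : 'M[R]_n) (e : 'I_m -> 'cV[R]_n) :=
  \sum_i xi i * bform M (e i) (e i).

Definition coupling_form (R : realType) n m (xi : 'I_m -> R) (L : 'M[R]_m) (M : 'M[R]_n)
    (e : 'I_m -> 'cV[R]_n) :=
  \sum_i \sum_j xi i * L i j * bform M (e i) (e j).

Section CouplingForm.
Variables (R : realType) (n m : nat) (L : 'M[R]_m) (xi : 'I_m -> R).
Hypotheses (coupL : coupling_matrix L) (xi_gt0 : forall i, 0 < xi i)
  (xiL : forall j, \sum_i xi i * L i j = 0).
Implicit Types (e : 'I_m -> 'cV[R]_n).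

Lemma coupling_form_diffusion (Q : 'M[R]_n) e : Q^T = Q ->
  coupling_form xi L Q e *+ 2 =
  - \sum_i \sum_j xi i * L i j * bform Q (e i - e j) (e i - e j).
Proof.
move=> QT.
have rows : \sum_i \sum_j xi i * L i j * bform Q (e i) (e i) = 0.
  apply: big1 => i _; under eq_bigr do rewrite mulrAC.
  by rewrite -mulr_sumr (proj2 coupL) mulr0.
have cols : \sum_i \sum_j xi i * L i j * bform Q (e j) (e j) = 0.
  by rewrite exchange_big big1 // => j _; rewrite -mulr_suml xiL mul0r.
have : \sum_i \sum_j (xi i * L i j * bform Q (e i - e j) (e i - e j)
          + (xi i * L i j * bform Q (e i) (e j)) *+ 2) = 0.
  transitivity (\sum_i \sum_j xi i * L i j * bform Q (e i) (e i)
                + \sum_i \sum_j xi i * L i j * bform Q (e j) (e j)); last first.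
    by rewrite rows cols addr0.
  rewrite -big_split; apply: eq_bigr => i _ /=.
  rewrite -big_split; apply: eq_bigr => j _ /=.
  rewrite bformBl !bformBr (bformC (e j) (e i) QT) mulr2n; ring.
under eq_bigr do rewrite big_split sumrMnl.
by rewrite big_split sumrMnl /= => /eqP; rewrite addr_eq0 => /eqP ->; rewrite opprK.
Qed.

Variables (k : nat) (B : 'M[R]_(n, k)).

Let BBt_sym : (B *m B^T)^T = B *m B^T.
Proof. by rewrite trmx_mul trmxK. Qed.

Let diffusion_term_ge0 e i j :
  0 <= xi i * L i j * bform (B *m B^T) (e i - e j) (e i - e j).
Proof.
have [->|ij] := eqVneq i j; first by rewrite subrr bform0l mulr0.
by rewrite !mulr_ge0 ?bform_mul_tr_ge0 ?(ltW (xi_gt0 i)) ?(proj1 coupL).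
Qed.

Lemma coupling_form_le0 e : coupling_form xi L (B *m B^T) e <= 0.
Proof.
have := coupling_form_diffusion e BBt_sym; rewrite mulr2n.
have : 0 <= \sum_i \sum_j xi i * L i j * bform (B *m B^T) (e i - e j) (e i - e j).
  by do 2!apply: sumr_ge0 => ? _; apply: diffusion_term_ge0.
lra.
Qed.

Lemma coupling_form_eq0 e : irreducible_mx L -> \sum_i xi i = 1 ->
  \sum_i xi i *: e i = 0 -> coupling_form xi L (B *m B^T) e = 0 ->
  forall i, B^T *m e i = 0.
Proof.
move=> irrL xi1 e_avg C0.
have S0 := coupling_form_diffusion e BBt_sym.
move/esym/eqP: S0; rewrite C0 mul0rn oppr_eq0 => /eqP S0.
have edge a b : L a b != 0 -> B^T *m e a = B^T *m e b.
  move=> Lab; have [->//|ab] := eqVneq a b.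
  have /(_ a isT) row0 := psumr_eq0P
    (fun a' _ => sumr_ge0 _ (fun j _ => diffusion_term_ge0 e a' j)) S0.
  have /(_ b isT) /eqP := psumr_eq0P (fun b _ => diffusion_term_ge0 e a b) row0.
  rewrite !mulf_eq0 (gt_eqF (xi_gt0 a)) (negPf Lab) /= bform_mul_tr bform1_eq0.
  by rewrite mulmxBr subr_eq0 => /eqP.
have Be_const := irreducible_mx_const irrL edge.
move=> i; transitivity (B^T *m \sum_j xi j *: e j); last by rewrite e_avg mulmx0.
rewrite mulmx_sumr -[LHS]scale1r -xi1 scaler_suml; apply: eq_bigr => j _.
by rewrite -scalemxAr (Be_const i j).
Qed.

End CouplingForm.

Local Open Scope classical_set_scope.

Section CompactDini.
Variables (R : realType) (T : ptopologicalType) (K : set T).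
Hypothesis cK : compact K.

Lemma compact_eventually_lt0 (g : nat -> T -> R) :
  (forall k, continuous (g k)) -> (forall k v, K v -> g k.+1 v <= g k v) ->
  (forall v, K v -> exists k, g k v < 0) ->
  exists k0, forall k v, (k0 <= k)%N -> K v -> g k v < 0.
Proof.
move=> g_cont g_nincr g_ev.
have g_mono k i v : (i <= k)%N -> K v -> g k v <= g i v.
  move=> /subnK <- Kv; elim: (k - i)%N => [|d IH] //=.
  by rewrite addSn (le_trans (g_nincr _ _ Kv)).
move: cK; rewrite compact_cover => /(_ nat setT (fun k => g k @^-1` [set r | r < 0])).
case=> [k _|v Kv|D _ DK].
- by apply: open_comp; [move=> v _; apply: g_cont | apply: open_lt].
- by have [k gk] := g_ev v Kv; exists k.
exists (\max_(i <- D) i)%N => k v Dk Kv; have [i Di giv] := DK v Kv.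
apply: le_lt_trans giv; apply: g_mono => //; apply: leq_trans Dk.
exact: (@leq_bigmax_seq _ _ xpredT id).
Qed.

Lemma compact_gt0_lower_bound (V : T -> R) : continuous V -> (forall v, K v -> 0 < V v) ->
  exists k0, forall k v, (k0 <= k)%N -> K v -> (k.+1%:R)^-1 < V v.
Proof.
move=> V_cont V_gt0.
suff [k0 k0P] : exists k0, forall k v, (k0 <= k)%N -> K v -> (k.+1%:R)^-1 - V v < 0.
  by exists k0 => k v k0k Kv; rewrite -subr_lt0; apply: k0P.
apply: compact_eventually_lt0.
- by move=> k v; exact: (continuousB (@cst_continuous _ _ _ v) (V_cont v)).
- by move=> k v _; rewrite lerD2r lef_pV2 ?ler_nat ?posrE.
- move=> v Kv; have Vv := V_gt0 v Kv; exists (Num.Def.archi_bound (V v)^-1).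
  rewrite subr_lt0 -[X in _ < X]invrK ltf_pV2 ?posrE ?invr_gt0 //.
  by rewrite (lt_le_trans (archi_boundP _)) ?ler_nat ?invr_ge0 ?ltW.
Qed.

Lemma compact_penalty (A C V : T -> R) :
  continuous A -> continuous C -> continuous V ->
  (forall v, K v -> C v <= 0) -> (forall v, K v -> 0 <= V v) ->
  (forall v, K v -> C v = 0 -> A v < 0) ->
  exists k0, forall k v, (k0 <= k)%N -> K v ->
    A v + k%:R * C v + (k.+1%:R)^-1 * V v < 0.
Proof.
move=> A_cont C_cont V_cont C_le0 V_ge0 A_lt0; apply: compact_eventually_lt0.
- move=> k v; have cst_v c : {for v, continuous (fun=> c : R)} by apply: cst_continuous.
  exact: continuousD (continuousD (A_cont v) (continuousM (cst_v _) (C_cont v)))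
                     (continuousM (cst_v _) (V_cont v)).
- move=> k v Kv; have := C_le0 v Kv.
  have : (k.+2%:R)^-1 * V v <= (k.+1%:R)^-1 * V v.
    by rewrite ler_wpM2r ?V_ge0 // lef_pV2 ?ler_nat ?posrE.
  have : k.+1%:R * C v = k%:R * C v + C v by rewrite -natr1 mulrDl mul1r.
  set x := k.+1%:R * C v; set y := k%:R * C v.
  set a := _^-1 * V v; set b := _^-1 * V v; lra.
- move=> v Kv; have V0 := V_ge0 v Kv.
  have [C0|C_neq0] := eqVneq (C v) 0.
    have A0 := A_lt0 v Kv C0.
    have [k Vk] : exists k : nat, V v / - A v < k.+1%:R.
      exists (Num.Def.archi_bound (V v / - A v)).
      by rewrite (lt_le_trans (archi_boundP _)) ?ler_nat // divr_ge0 // oppr_ge0 ltW.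
    rewrite ltr_pdivrMr ?oppr_gt0 // in Vk.
    have Vk' : (k.+1%:R)^-1 * V v < - A v by rewrite mulrC ltr_pdivrMr ?ltr0n // mulrC.
    by exists k; rewrite C0 mulr0 addr0; move: Vk'; set b := _ * V v; lra.
  have C_lt0 : C v < 0 by rewrite lt_neqAle C_neq0 C_le0.
  have [k Ck] : exists k : nat, (`|A v| + V v) / - C v < k%:R.
    exists (Num.Def.archi_bound ((`|A v| + V v) / - C v)).
    by rewrite archi_boundP // divr_ge0 ?addr_ge0 // oppr_ge0 ltW.
  rewrite ltr_pdivrMr ?oppr_gt0 // mulrN in Ck.
  have Vk : (k.+1%:R)^-1 * V v <= V v by rewrite ler_piMl // invf_le1 ?ler1n ?ltr0n.
  have := ler_norm (A v).
  by exists k; move: Ck Vk; set kC := k%:R * C v; set b := _^-1 * V v; lra.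
Qed.

End CompactDini.

Lemma continuous_bform (R : realType) (T : topologicalType) n (M : 'M[R]_n)
    (u w : T -> 'cV[R]_n) :
  (forall a, continuous (fun t => u t a 0)) -> (forall a, continuous (fun t => w t a 0)) ->
  continuous (fun t => bform M (u t) (w t)).
Proof.
move=> u_cont w_cont; under eq_fun do rewrite bformE.
apply: continuous_big => [|a _]; first exact: add_continuous.
apply: continuous_big => [|b _]; first exact: add_continuous.
move=> t; have cst_t c : {for t, continuous (fun=> c : R)} by apply: cst_continuous.
exact: continuousM (continuousM (u_cont a t) (cst_t _)) (w_cont b t).
Qed.

Lemma homogeneous_le0 (R : realType) (V : normedModType R) (S : set V) (F : V -> R) :
  (forall s v, S v -> S (s *: v)) -> (forall s v, F (s *: v) = s ^+ 2 * F v) ->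
  (forall v, S v -> `|v| = 1 -> F v < 0) -> forall v, S v -> F v <= 0.
Proof.
move=> S_scale F_hom F_lt0 v Sv; have [->|v0] := eqVneq v 0.
  by rewrite -(scale0r 0) F_hom expr0n mul0r.
have nv_gt0 : 0 < `|v| by rewrite normr_gt0.
rewrite -[v](scalerKV (lt0r_neq0 nv_gt0)) F_hom.
rewrite pmulr_rle0 ?exprn_gt0 //; apply/ltW/F_lt0; first exact: S_scale.
by rewrite normrZ normfV normr_id mulVf ?gt_eqF.
Qed.

(* A family of m vectors of R^n is encoded as a row vector of length n * m, the
   space in which closed bounded sets are known to be compact. *)
Section ColumnsOfVector.
Variables (R : realType) (n m : nat).

Definition vec_cols (v : 'rV[R]_(n * m)) (i : 'I_m) : 'cV[R]_n := col i (vec_mx v).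

Definition cols_vec (e : 'I_m -> 'cV[R]_n) : 'rV[R]_(n * m) :=
  mxvec (\matrix_(a, i) e i a 0).

Lemma cols_vecK e : vec_cols (cols_vec e) = e.
Proof.
by rewrite /vec_cols /cols_vec mxvecK; apply/funext => i; apply/matrixP => a b; rewrite ord1 !mxE.
Qed.

Lemma vec_colsE v i a : vec_cols v i a 0 = v 0 (mxvec_index a i).
Proof. by rewrite !mxE. Qed.

Lemma vec_colsZ s v : vec_cols (s *: v) = fun i => s *: vec_cols v i.
Proof. by apply/funext => i; apply/matrixP => a b; rewrite ord1 !vec_colsE !mxE. Qed.

Lemma vec_cols_continuous i a : continuous (fun v => vec_cols v i a 0).
Proof. under eq_fun do rewrite vec_colsE; exact: coord_continuous. Qed.

Lemma vec_cols_eq0 v : (forall i, vec_cols v i = 0) -> v = 0.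
Proof.
move=> v0; rewrite -[v]vec_mxK; apply/eqP; rewrite mxvec_eq0; apply/eqP.
by apply/matrixP => a i; have /matrixP /(_ a 0) := v0 i; rewrite !mxE.
Qed.

Lemma norm_vec_cols_le v i : `|vec_cols v i| <= `|v|.
Proof.
rewrite [leLHS]/Num.norm /= mx_normrE; apply: bigmax_le => // -[a b] _ /=.
rewrite ord1 vec_colsE [leRHS]/Num.norm /= mx_normrE.
by apply/bigmax_geP; right; exists (0, mxvec_index a i).
Qed.

End ColumnsOfVector.

Section WeightedForms.
Variables (R : realType) (n m : nat) (xi : 'I_m -> R).
Implicit Types (M : 'M[R]_n) (e : 'I_m -> 'cV[R]_n).

Lemma wqformZ M e s : wqform xi M (fun i => s *: e i) = s ^+ 2 * wqform xi M e.
Proof. by rewrite /wqform mulr_sumr; apply: eq_bigr => i _; rewrite bformZl bformZr; ring. Qed.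

Lemma coupling_formZ (L : 'M[R]_m) M e s :
  coupling_form xi L M (fun i => s *: e i) = s ^+ 2 * coupling_form xi L M e.
Proof.
rewrite /coupling_form mulr_sumr; apply: eq_bigr => i _; rewrite mulr_sumr.
by apply: eq_bigr => j _; rewrite bformZl bformZr; ring.
Qed.

Hypothesis xi_gt0 : forall i, 0 < xi i.

Lemma wqform_ge0 M e : (forall u, 0 <= bform M u u) -> 0 <= wqform xi M e.
Proof. by move=> M_ge0; apply: sumr_ge0 => i _; apply: mulr_ge0; [apply: ltW|]. Qed.

Lemma wqform_gt0 M e i : (forall u, u != 0 -> 0 < bform M u u) -> e i != 0 ->
  0 < wqform xi M e.
Proof.
move=> M_gt0 ei; have M_ge0 u : 0 <= bform M u u.
  by have [->|/M_gt0/ltW//] := eqVneq u 0; rewrite bform0l.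
rewrite /wqform (bigD1 i) //= ltr_pwDl ?mulr_gt0 ?M_gt0 //.
by apply: sumr_ge0 => j _; apply: mulr_ge0; [apply: ltW|].
Qed.

End WeightedForms.

Section ContinuityOnColumns.
Variables (R : realType) (n m : nat) (xi : 'I_m -> R).

Lemma continuous_wqform_cols (M : 'M[R]_n) :
  continuous (fun v : 'rV[R]_(n * m) => wqform xi M (vec_cols v)).
Proof.
apply: continuous_big => [|i _]; first exact: add_continuous.
move=> v; have cst_v c : {for v, continuous (fun=> c : R)} by apply: cst_continuous.
by apply: (continuousM (cst_v _)); apply: continuous_bform => a; apply: vec_cols_continuous.
Qed.

Lemma continuous_coupling_form_cols (L : 'M[R]_m) (M : 'M[R]_n) :
  continuous (fun v : 'rV[R]_(n * m) => coupling_form xi L M (vec_cols v)).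
Proof.
apply: continuous_big => [|i _]; first exact: add_continuous.
apply: continuous_big => [|j _]; first exact: add_continuous.
move=> v; have cst_v c : {for v, continuous (fun=> c : R)} by apply: cst_continuous.
by apply: (continuousM (cst_v _)); apply: continuous_bform => a; apply: vec_cols_continuous.
Qed.

Lemma closed_vec_cols_avg0 :
  closed [set v : 'rV[R]_(n * m) | \sum_i xi i *: vec_cols v i = 0].
Proof.
pose avg (v : 'rV[R]_(n * m)) := \sum_i xi i *: vec_cols v i.
have avg_cont a : continuous (fun v => avg v a 0).
  under eq_fun do rewrite summxE.
  apply: continuous_big => [|i _]; first exact: add_continuous.
  have -> : (fun v => (xi i *: vec_cols v i) a 0) = (fun v => xi i * vec_cols v i a 0).
    by apply/funext => v; rewrite [LHS]mxE.
  move=> v; have cst_v c : {for v, continuous (fun=> c : R)} by apply: cst_continuous.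
  by apply: (continuousM (cst_v _)); apply: vec_cols_continuous.
have -> : [set v | avg v = 0] = (fun v => bform 1%:M (avg v) (avg v)) @^-1` [set 0].
  apply/seteqP; split => v /=; first by move->; rewrite bform0l.
  by move/eqP; rewrite bform1_eq0 => /eqP.
by apply: preimage_closed; [move=> v _; apply: continuous_bform | apply: closed_eq].
Qed.

End ContinuityOnColumns.

Lemma compact_closedI_unit_sphere (R : realType) N (S : set 'rV[R]_N) :
  closed S -> compact (S `&` [set v | `|v| = 1]).
Proof.
move=> S_closed; apply: bounded_closed_compact.
  by exists 1; split => // M M1 v [_ /= ->]; apply: ltW.
apply: closedI => //.
have -> : [set v : 'rV[R]_N | `|v| = 1] = (fun v => `|v|) @^-1` [set x | x = 1] by [].
by apply: preimage_closed; [move=> v _; exact: norm_continuous | exact: closed_eq].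
Qed.

Lemma bform_ran_eq0 (R : realType) n k (B : 'M[R]_(n, k)) (M : 'M[R]_n) u w :
  (forall z, Ran M z -> Ran (B *m B^T) z) -> B^T *m u = 0 -> bform M u w = 0.
Proof.
move=> ranM Bu; rewrite /bform -mulmxA.
have [y ->] : Ran (B *m B^T) (M *m w) by apply: ranM; exists w.
by rewrite !mulmxA -[u^T *m B]trmxK trmx_mul trmxK Bu trmx0 !mul0mx mxE.
Qed.

Section LargeCouplingEstimate.
Variables (R : realType) (n m : nat) (L : 'M[R]_m) (xi : 'I_m -> R).
Variables (P Delta Gamma : 'M[R]_n) (eps : R) (k0 : nat) (B : 'M[R]_(n, k0)).
Hypotheses (coupL : coupling_matrix L) (irrL : irreducible_mx L).
Hypotheses (xi_gt0 : forall i, 0 < xi i) (xi1 : \sum_i xi i = 1).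
Hypothesis xiL : forall j, \sum_i xi i * L i j = 0.
Hypotheses (posP : posdef P) (eps_gt0 : 0 < eps) (PGammaB : P *m Gamma = B *m B^T).
Hypothesis ranPDelta : forall u, Ran (P *m Delta) u -> Ran (P *m Gamma) u.

Let dissipation (e : 'I_m -> 'cV[R]_n) :=
  wqform xi (P *m Delta) e - eps * wqform xi 1%:M e.

Lemma dissipation_lt0 e : \sum_i xi i *: e i = 0 ->
  coupling_form xi L (P *m Gamma) e = 0 -> (exists i, e i != 0) -> dissipation e < 0.
Proof.
rewrite /dissipation PGammaB => e_avg C0 [i ei].
have Be := coupling_form_eq0 coupL xi_gt0 xiL irrL xi1 e_avg C0.
have -> : wqform xi (P *m Delta) e = 0.
  apply: big1 => j _; rewrite (bform_ran_eq0 _ _ (Be j)) ?mulr0 // => z.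
  by rewrite -PGammaB; apply: ranPDelta.
rewrite sub0r oppr_lt0 mulr_gt0 // (wqform_gt0 xi_gt0 _ ei) //.
exact: bform1_gt0.
Qed.

Lemma large_coupling_estimate : exists k : nat, forall e, \sum_i xi i *: e i = 0 ->
  dissipation e + k%:R * coupling_form xi L (P *m Gamma) e <= - (k.+1%:R)^-1 * wqform xi P e
  /\ forall i, `|e i| ^+ 2 <= k.+1%:R * wqform xi P e.
Proof.
pose S := [set v : 'rV[R]_(n * m) | \sum_i xi i *: vec_cols v i = 0].
pose K := S `&` [set v | `|v| = 1].
have cK : compact K := compact_closedI_unit_sphere (@closed_vec_cols_avg0 _ _ _ xi).
have S_scale s v : S v -> S (s *: v).
  rewrite /S /= vec_colsZ => Sv; under eq_bigr do rewrite scalerA mulrC -scalerA.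
  by rewrite -scaler_sumr Sv scaler0.
have K_cols v : K v -> exists i, vec_cols v i != 0.
  move=> [_ /= v1]; have v0 : v != 0.
    by apply/eqP => v0; move: v1; rewrite v0 normr0 => /eqP; rewrite eq_sym oner_eq0.
  apply/existsP; apply: contraNT v0; rewrite negb_exists => /forallP v0.
  by apply/eqP/vec_cols_eq0 => i; apply/eqP; have := v0 i; rewrite negbK.
have P_gt0 u : u != 0 -> 0 < bform P u u by apply: (proj2 posP).
pose A v := dissipation (vec_cols v).
pose C v := coupling_form xi L (P *m Gamma) (vec_cols v).
pose V v := wqform xi P (vec_cols v).
have [k1 k1P] : exists k1, forall k v, (k1 <= k)%N -> K v ->
    A v + k%:R * C v + (k.+1%:R)^-1 * V v < 0.
  apply: compact_penalty => //.
  - move=> v; have cst_v c : {for v, continuous (fun=> c : R)} by apply: cst_continuous.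
    exact: continuousB (@continuous_wqform_cols _ _ _ xi _ v)
                       (continuousM (cst_v _) (@continuous_wqform_cols _ _ _ xi _ v)).
  - exact: continuous_coupling_form_cols.
  - exact: continuous_wqform_cols.
  - by move=> v _; rewrite /C PGammaB; apply: coupling_form_le0.
  - move=> v _; apply: wqform_ge0 => // u.
    by have [->|/P_gt0/ltW//] := eqVneq u 0; rewrite bform0l.
  - by move=> v Kv C0; apply: dissipation_lt0 (K_cols v Kv) => //; case: Kv.
have [k2 k2P] : exists k2, forall k v, (k2 <= k)%N -> K v -> (k.+1%:R)^-1 < V v.
  apply: compact_gt0_lower_bound => //; first exact: continuous_wqform_cols.
  by move=> v /K_cols [i ei]; apply: wqform_gt0 ei.
exists (maxn k1 k2) => e e_avg; set k := maxn k1 k2.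
have Se : S (cols_vec e) by rewrite /S /= cols_vecK.
split.
  have : A (cols_vec e) + k%:R * C (cols_vec e) + (k.+1%:R)^-1 * V (cols_vec e) <= 0.
    apply: (@homogeneous_le0 _ _ S (fun v => A v + k%:R * C v + (k.+1%:R)^-1 * V v)
              S_scale _ _ _ Se).
      by move=> s v /=; rewrite /A /C /V /dissipation vec_colsZ !wqformZ coupling_formZ; ring.
    by move=> v Sv v1; apply: (k1P k v (leq_maxl _ _)).
  rewrite /A /C /V cols_vecK mulNr; set W := _^-1 * _; set Ck := k%:R * _; lra.
move=> i; have : `|vec_cols (cols_vec e) i| ^+ 2 - k.+1%:R * V (cols_vec e) <= 0.
  apply: (@homogeneous_le0 _ _ S (fun v => `|vec_cols v i| ^+ 2 - k.+1%:R * V v)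
            S_scale _ _ _ Se).
    move=> s v /=; rewrite /V vec_colsZ wqformZ normrZ exprMn real_normK ?num_real //.
    ring.
  move=> v Sv v1; rewrite subr_lt0.
  apply: (@le_lt_trans _ _ 1); first by rewrite expr_le1 // -v1 norm_vec_cols_le.
  have := k2P k v (leq_maxr _ _) (conj Sv v1).
  by rewrite -(ltr_pM2l (ltr0Sn R k)) mulfV // lt0r_neq0 // ltr0Sn.
by rewrite /V cols_vecK subr_le0.
Qed.

End LargeCouplingEstimate.

Lemma is_derive_mx_coord (R : realType) p q (u : R -> 'M[R]_(p, q)) (t : R) du a b :
  is_derive t 1 u du -> is_derive t 1 (fun s => u s a b) (du a b).
Proof.
move=> [u_der <-]; rewrite derive_mx // mxE; apply: derivableP.
exact: (derivable_mxP _ _ _).1 u_der a b.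
Qed.

Lemma is_derive_bform (R : realType) n (M : 'M[R]_n) (u w : R -> 'cV[R]_n) (t : R) du dw :
  is_derive t 1 u du -> is_derive t 1 w dw ->
  is_derive t 1 (fun s => bform M (u s) (w s)) (bform M du (w t) + bform M (u t) dw).
Proof.
move=> u_der w_der; rewrite !bformE -big_split /=.
have -> : (fun s => bform M (u s) (w s)) =
    \sum_a \sum_b (fun s => u s a 0 * M a b * w s b 0).
  by apply/funext => s; rewrite bformE fct_sumE; apply: eq_bigr => a _; rewrite fct_sumE.
apply: is_derive_sum => a; rewrite -big_split /=; apply: is_derive_sum => b.
have -> : (fun s => u s a 0 * M a b * w s b 0) =
    (M a b \*: (fun s => u s a 0)) * (fun s => w s b 0).
  by apply/funext => s; rewrite [u s a 0 * _]mulrC.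
apply: is_derive_eq.
  exact/is_deriveM/(is_derive_mx_coord b 0 w_der)/is_deriveZ/is_derive_mx_coord.
by rewrite /= /GRing.scale /=; ring.
Qed.

Lemma is_derive_wqform (R : realType) n m (xi : 'I_m -> R) (M : 'M[R]_n)
    (e : R -> 'I_m -> 'cV[R]_n) (t : R) (de : 'I_m -> 'cV[R]_n) :
  M^T = M -> (forall i, is_derive t 1 (fun s => e s i) (de i)) ->
  is_derive t 1 (fun s => wqform xi M (e s)) (2 * \sum_i xi i * bform M (e t i) (de i)).
Proof.
move=> MT e_der.
have -> : (fun s => wqform xi M (e s)) = \sum_i xi i \*: (fun s => bform M (e s i) (e s i)).
  by apply/funext => s; rewrite fct_sumE.
apply: is_derive_eq; first by apply: is_derive_sum => i; apply/is_deriveZ/is_derive_bform.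
rewrite mulr_sumr; apply: eq_bigr => i _.
rewrite /= (bformC (de i) _ MT).
change (xi i * (bform M (e t i) (de i) + bform M (e t i) (de i)) =
        2 * (xi i * bform M (e t i) (de i))); ring.
Qed.

Lemma derive_le_cvg0 (R : realType) (V : R -> R) (a : R) : 0 < a ->
  (forall t : R, 0 < t -> 0 <= V t) -> (forall t : R, 0 < t -> derivable V t 1) ->
  (forall t : R, 0 < t -> 'D_1 V t <= - a * V t) -> V @ +oo --> 0.
Proof.
move=> a_gt0 V_ge0 V_der V'_le.
pose W t := V t * expR (a * t).
have W_der (t : R) : 0 < t ->
    is_derive t 1 W (V t * (expR (a * t) * a) + expR (a * t) * 'D_1 V t).
  move=> t_gt0; have := V_der t t_gt0 => /derivableP V_is_der.
  have lin_der : is_derive t 1 (fun r : R => a * r) a.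
    have := is_deriveZ a (is_derive_id t (1 : R)).
    by move/is_derive_eq; apply; rewrite /GRing.scale /= mulr1.
  have exp_der : is_derive t 1 (fun r => expR (a * r)) (expR (a * t) * a).
    exact: (is_derive1_comp (f := expR) (g := fun r => a * r)).
  exact: is_deriveM V_is_der exp_der.
have W_nincr (t : R) : 1 <= t -> W t <= W 1.
  have W_derivable (r : R) : 0 < r -> derivable W r 1 by case/W_der.
  move=> t1; apply: (@ler0_derive1_nincry _ W 1) => // [r||].
  - by rewrite in_itv /= andbT => r1; apply: W_derivable (lt_trans ltr01 r1).
  - move=> r; rewrite in_itv /= andbT => r1; have r0 := lt_trans ltr01 r1.
    rewrite derive1E; case: (W_der r r0) => _ ->.
    have := ler_wpM2l (expR_ge0 (a * r)) (V'_le r r0).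
    by set e := expR (a * r); set D := 'D_1 V r; nra.
  - apply: derivable_within_continuous => r; rewrite in_itv /= andbT => r1.
    exact: W_derivable (lt_le_trans ltr01 r1).
have V_le (t : R) : 1 <= t -> V t <= W 1 * expR (- (a * t)).
  move=> t1; apply: le_trans (ler_wpM2r (expR_ge0 _) (W_nincr t t1)).
  by rewrite /W -mulrA -expRD subrr expR0 mulr1.
have exp_cvg0 : expR (- (a * t)) @[t --> +oo] --> 0.
  have at_cvgy : a * t @[t --> +oo] --> +oo.
    by apply/cvgryPge => A; near=> r; rewrite -ler_pdivrMl.
  exact: (cvg_comp _ _ at_cvgy (@cvgr_expR R)).
apply: (@squeeze_cvgr _ _ _ _ (cst 0) (fun t => W 1 * expR (- (a * t))) V _ 0).
- near=> t; rewrite /= V_ge0 ?V_le //=.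
- exact: cvg_cst.
- by rewrite -[X in _ --> X](mulr0 (W 1)); apply: cvgMl_tmp.
Unshelve. all: by end_near.
Qed.

Lemma sqr_norm_le_cvg0 (R : realType) (T : Type) (F : set_system T) (FF : Filter F)
    (V : normedModType R) (u : T -> V) (g : T -> R) (K : R) :
  (forall t, `|u t| ^+ 2 <= K * g t) -> g @ F --> 0 -> u @ F --> 0.
Proof.
move=> u_le g_cvg0; apply: norm_cvg0.
apply: (@squeeze_cvgr _ _ _ _ (cst 0) (fun t => Num.sqrt (K * g t)) _ _ 0).
- apply: nearW => t /=; rewrite normr_ge0 /= -[leLHS]normr_id -sqrtr_sqr.
  exact: ler_wsqrtr.
- exact: cvg_cst.
- have := cvg_comp _ _ (cvgMl_tmp (a := K) g_cvg0) (@sqrt_continuous R (K * 0)).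
  by rewrite mulr0 sqrtr0; apply.
Qed.

Lemma QUAD_wsum_le (R : realType) n m (f : 'cV[R]_n -> 'cV[R]_n) (P Delta : 'M[R]_n)
    (eps : R) (xi : 'I_m -> R) (y : 'I_m -> 'cV[R]_n) (z : 'cV[R]_n) :
  QUAD f P Delta eps -> (forall i, 0 <= xi i) ->
  \sum_i xi i * bform P (y i - z) (f (y i) - f z) <=
  wqform xi (P *m Delta) (fun i => y i - z) - eps * wqform xi 1%:M (fun i => y i - z).
Proof.
move=> QUADf xi_ge0; rewrite /wqform mulr_sumr -sumrB; apply: ler_sum => i _.
rewrite mulrCA -mulrBr ler_wpM2l //.
have : bform P (y i - z) (f (y i) - f z - Delta *m (y i - z))
       <= - eps * bform 1%:M (y i - z) (y i - z) by rewrite bform1; apply: QUADf.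
by rewrite bformBr -bform_mulmx; lra.
Qed.

Section CoupledSystem.
Variables (R : realType) (n m : nat) (f : 'cV[R]_n -> 'cV[R]_n) (Gamma : 'M[R]_n).
Variables (L : 'M[R]_m) (c : R) (xi : 'I_m -> R) (P : 'M[R]_n).
Hypotheses (coupL : coupling_matrix L) (xi1 : \sum_i xi i = 1).

Let field (y : 'I_m -> 'cV[R]_n) i := f (y i) + c *: \sum_j L i j *: (Gamma *m y j).

Lemma wsum_dev0 (y : 'I_m -> 'cV[R]_n) :
  \sum_i xi i *: (y i - \sum_j xi j *: y j) = 0.
Proof.
by under eq_bigr do rewrite scalerBr; rewrite sumrB -scaler_suml xi1 scale1r subrr.
Qed.

Lemma coupled_energy_rate (y : 'I_m -> 'cV[R]_n) :
  let yb := \sum_j xi j *: y j in let e i := y i - yb in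
  \sum_i xi i * bform P (e i) (field y i - \sum_j xi j *: field y j) =
  \sum_i xi i * bform P (e i) (f (y i) - f yb) + c * coupling_form xi L (P *m Gamma) e.
Proof.
move=> yb e; have e_avg := wsum_dev0 y.
have orth w : \sum_i xi i * bform P (e i) w = 0 by rewrite -bform_suml e_avg bform0l.
have coupling i : \sum_j L i j * bform P (e i) (Gamma *m y j) =
                  \sum_j L i j * bform (P *m Gamma) (e i) (e j).
  transitivity (\sum_j (L i j * bform (P *m Gamma) (e i) (e j)
                        + L i j * bform (P *m Gamma) (e i) yb)).
    by apply: eq_bigr => j _; rewrite !bform_mulmx -mulrDr -bformDr -mulmxDr subrK.
  by rewrite big_split /= -mulr_suml (proj2 coupL) mul0r addr0.
have CF : coupling_form xi L (P *m Gamma) e =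
          \sum_i xi i * \sum_j L i j * bform (P *m Gamma) (e i) (e j).
  by apply: eq_bigr => i _; rewrite mulr_sumr; apply: eq_bigr => j _; rewrite mulrA.
rewrite CF; transitivity (\sum_i (xi i * bform P (e i) (f (y i) - f yb)
    + c * (xi i * \sum_j L i j * bform (P *m Gamma) (e i) (e j))
    + xi i * bform P (e i) (f yb) - xi i * bform P (e i) (\sum_j xi j *: field y j))).
  by apply: eq_bigr => i _; rewrite /field !bformBr bformDr bformZr bform_sumr coupling; ring.
by rewrite sumrB !big_split /= !orth addr0 subr0 -mulr_sumr.
Qed.

Variables (Delta : 'M[R]_n) (eps : R) (k : nat).
Hypotheses (xi_gt0 : forall i, 0 < xi i) (posP : posdef P) (QUADf : QUAD f P Delta eps).
Hypothesis C_le0 : forall e, coupling_form xi L (P *m Gamma) e <= 0.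
Hypothesis k_est : forall e, \sum_i xi i *: e i = 0 ->
  wqform xi (P *m Delta) e - eps * wqform xi 1%:M e + k%:R * coupling_form xi L (P *m Gamma) e
    <= - (k.+1%:R)^-1 * wqform xi P e
  /\ forall i, `|e i| ^+ 2 <= k.+1%:R * wqform xi P e.
Hypothesis k_le_c : k%:R <= c.
Variable x : 'I_m -> R -> 'cV[R]_n.
Hypothesis x_sol : is_solution f Gamma L c x.

Let e t i := x i t - \sum_j xi j *: x j t.

Lemma coupled_energy_decay (t : R) : 0 < t ->
  exists2 dV, is_derive t 1 (fun s => wqform xi P (e s)) dV &
    dV <= - (2 / k.+1%:R) * wqform xi P (e t).
Proof.
move=> t_gt0; pose y j := x j t.
have avg_der : is_derive t 1 (fun s => \sum_j xi j *: x j s) (\sum_j xi j *: field y j).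
  have -> : (fun s => \sum_j xi j *: x j s) = \sum_j xi j \*: x j.
    by apply/funext => s; rewrite fct_sumE.
  by apply: is_derive_sum => j; apply/is_deriveZ/x_sol.
eexists.
  by apply: is_derive_wqform (proj1 posP) _ => i; apply: is_deriveB (x_sol i t_gt0) avg_der.
rewrite coupled_energy_rate.
have := QUAD_wsum_le y (\sum_j xi j *: y j) QUADf (fun i => ltW (xi_gt0 i)).
have := (k_est (wsum_dev0 y)).1.
have := ler_wnM2r (C_le0 (fun i => y i - \sum_j xi j *: y j)) k_le_c.
rewrite /e /y; clear avg_der y.
set Q := \sum_i xi i * bform P _ _; set Cf := coupling_form _ _ _ _; set W := wqform xi P _.
set D := wqform xi (P *m Delta) _; set I := wqform xi 1%:M _.
have -> : - (2 / k.+1%:R) * W = 2 * (- k.+1%:R^-1 * W) by ring.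
set kW := - _ * W; set kC := k%:R * Cf; set cC := c * Cf; lra.
Qed.

Lemma coupled_energy_cvg0 : wqform xi P (e t) @[t --> +oo] --> 0.
Proof.
apply: (@derive_le_cvg0 _ _ (2 / k.+1%:R)) => [||t t_gt0|t t_gt0].
- by rewrite divr_gt0.
- move=> t _; apply: wqform_ge0 => // u.
  by have [->|/(proj2 posP)/ltW//] := eqVneq u 0; rewrite bform0l.
- by have [dV [? _] _] := coupled_energy_decay t_gt0.
- by have [dV [_ ->]] := coupled_energy_decay t_gt0.
Qed.

Lemma coupled_synchronizes : synchronizes x.
Proof.
have e_cvg0 i : e t i @[t --> +oo] --> (0 : 'cV[R]_n).
  apply: (@sqr_norm_le_cvg0 _ _ _ _ _ _ _ k.+1%:R _ coupled_energy_cvg0) => t.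
  exact: (k_est (wsum_dev0 _)).2.
move=> i j; have -> : (fun t => x i t - x j t) = (fun t => e t i - e t j).
  by apply/funext => t; rewrite /e opprB addrA subrK.
by rewrite -(subrr 0); apply: cvgB.
Qed.

End CoupledSystem.

Local Close Scope classical_set_scope.
Unset Implicit Arguments.

Theorem proposition1 (R : realType) (n m : nat)
    (f : 'cV[R]_n -> 'cV[R]_n) (Gamma : 'M[R]_n) (L : 'M[R]_m)
    (P Delta : 'M[R]_n) (eps : R) :
  continuous f ->
  coupling_matrix L -> irreducible_mx L -> \rank L = m.-1 ->
  posdef P -> 0 < eps -> QUAD f P Delta eps ->
  (forall u, Ran (P *m Delta) u <-> Ran (P *m Gamma) u) ->
  (exists (k : nat) (B : 'M[R]_(n, k)), P *m Gamma = B *m B^T) ->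
  posdef_on (P *m Gamma) (Ran (P *m Gamma)) ->
  exists c0 : R, forall c : R, 0 < c -> c0 <= c ->
    forall x : 'I_m -> R -> 'cV[R]_n,
      is_solution f Gamma L c x -> synchronizes x.
Proof.
move=> _ coupL irrL _ posP eps_gt0 QUADf ranPDelta [k0 [B PGammaB]] _.
have [m0|m_gt0] := posnP m.
  by exists 0 => c _ _ x _ [i i_lt]; exfalso; rewrite m0 in i_lt.
have [xi [xi_gt0 xi1 xiL]] := coupling_mx_perron coupL irrL m_gt0.
have [k k_est] := large_coupling_estimate coupL irrL xi_gt0 xi1 xiL posP eps_gt0 PGammaB
  (fun u => (ranPDelta u).1).
have C_le0 e : coupling_form xi L (P *m Gamma) e <= 0.
  by rewrite PGammaB; apply: coupling_form_le0.
exists k%:R => c _ k_le_c x x_sol.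
exact: (coupled_synchronizes coupL xi1 xi_gt0 posP QUADf C_le0 k_est k_le_c x_sol).
Qed.
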